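(* Let $\mathcal{O}$ be a homogeneous and finitely generated operad. In the prefix poset of $\mathcal{O}$, for all $x,y\in\mathcal{O}$, $x\preceq y$ if and only if $x$ is a prefix of $y$, i.e. there exist $z_1,\dots,z_{|x|}\in\mathcal{O}$ with $y=x\circ[z_1,\dots,z_{|x|}]$. Moreover, $y$ covers $x$ if and only if there exist $\mathtt{a}\in\mathfrak{G}_\mathcal{O}$ and $i\in[|x|]$ such that $y=x\circ_i\mathtt{a}$.
   Context: Operads are nonsymmetric set-operads: graded sets $\mathcal{O}=\bigsqcup_n\mathcal{O}(n)$ (arity $|x|=n$ for $x\in\mathcal{O}(n)$) with partial compositions $\circ_i:\mathcal{O}(n)\times\mathcal{O}(m)\to\mathcal{O}(n+m-1)$, $i\in[n]$, and unit $\mathbf{1}\in\mathcal{O}(1)$, satisfying the usual associativity, commutativity and unit axioms. The full composition is $x\circ[z_1,\dots,z_n]=(\cdots((x\circ_n z_n)\circ_{n-1}z_{n-1})\cdots)\circ_1 z_1$ for $x\in\mathcal{O}(n)$. If $\mathcal{O}(0)=\emptyset$ and $\mathcal{O}(1)=\{\mathbf{1}\}$, $\mathcal{O}$ has a unique minimal generating set $\mathfrak{G}_\mathcal{O}$. A treelike expression of $x$ is a planar rooted tree with internal nodes decorated by elements of $\mathfrak{G}_\mathcal{O}$ (arity matching) evaluating to $x$ in $\mathcal{O}$. $\mathcal{O}$ is homogeneous if $\mathcal{O}(0)=\emptyset$, $\mathcal{O}(1)=\{\mathbf{1}\}$, and all treelike expressions of any given element have the same number of internal nodes (its degree); it is finitely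 generated if $\mathfrak{G}_\mathcal{O}$ is finite. The prefix poset of $\mathcal{O}$ is $\mathcal{O}$ ordered by $x\preceq y$ iff $y=(\cdots((x\circ_{i_1}\mathtt{a}_1)\circ_{i_2}\mathtt{a}_2)\cdots)\circ_{i_k}\mathtt{a}_k$ for some $k\ge0$, $\mathtt{a}_j\in\mathfrak{G}_\mathcal{O}$ and positive integers $i_j$. *)

From mathcomp Require Import all_boot.
Set Implicit Arguments. Unset Strict Implicit. Unset Printing Implicit Defensive.

(* Positions are 1-based. *)
Record operad := Operad {
  carrier :> Type;
  arity : carrier -> nat;
  ocomp : nat -> carrier -> carrier -> carrier;
  ounit : carrier;
  arity_unit : arity ounit = 1;
  arity_comp : forall i x y, 1 <= i <= arity x ->
      arity (ocomp i x y) = arity x + arity y - 1;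
  comp_assoc : forall x y z i j, 1 <= i <= arity x -> 1 <= j <= arity y ->
      ocomp (i + j - 1) (ocomp i x y) z = ocomp i x (ocomp j y z);
  comp_comm : forall x y z i j, 1 <= i -> i < j -> j <= arity x ->
      ocomp (j + arity y - 1) (ocomp i x y) z = ocomp i (ocomp j x z) y;
  comp_unit_l : forall x, ocomp 1 ounit x = x;
  comp_unit_r : forall x i, 1 <= i <= arity x -> ocomp i x ounit = x
}.

Section Defs.
Variable O : operad.
Implicit Types (x y z : O) (G : O -> Prop).

(* Full composition x o [z_1, ..., z_n]
   = (...((x o_n z_n) o_{n-1} z_{n-1}) ...) o_1 z_1. *)
Fixpoint fcomp_from (i : nat) (x : O) (zs : seq O) : O :=
  match zs with
  | [::] => x
  | z :: zs' => ocomp i (fcomp_from i.+1 x zs') z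
  end.
Definition full_comp (x : O) (zs : seq O) : O := fcomp_from 1 x zs.

Inductive generated G : O -> Prop :=
| gen_unit : generated G (ounit O)
| gen_base a : G a -> generated G a
| gen_comp i x y : generated G x -> generated G y -> 1 <= i <= arity x ->
    generated G (ocomp i x y).

Definition generating_set G : Prop := forall x, generated G x.

Definition min_generating_set G : Prop :=
  generating_set G /\
  forall G', (forall a, G' a -> G a) -> generating_set G' ->
    forall a, G a -> G' a.

Fixpoint in_list (a : O) (s : seq O) : Prop :=
  match s with [::] => False | b :: s' => b = a \/ in_list a s' end.

Definition finite_set G : Prop := exists s : seq O, forall a, G a <-> in_list a s.

Inductive tree : Type :=
| Leaf : tree
| Node : O -> seq tree -> tree.

Fixpoint eval_tree (t : tree) : O :=
  match t with
  | Leaf => ounit O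
  | Node a ts => full_comp a (map eval_tree ts)
  end.

Fixpoint wf_tree G (t : tree) : Prop :=
  match t with
  | Leaf => True
  | Node a ts => G a /\ size ts = arity a /\
      (fix wfl (l : seq tree) : Prop :=
         match l with [::] => True | t' :: l' => wf_tree G t' /\ wfl l' end) ts
  end.

Fixpoint nodes (t : tree) : nat :=
  match t with
  | Leaf => 0
  | Node _ ts => (sumn (map nodes ts)).+1
  end.

Definition homogeneous G : Prop :=
  (forall x, arity x <> 0) /\
  (forall x, arity x = 1 -> x = ounit O) /\
  (forall t1 t2, wf_tree G t1 -> wf_tree G t2 -> eval_tree t1 = eval_tree t2 ->
     nodes t1 = nodes t2).

Inductive prefix_le G (x : O) : O -> Prop :=
| pre_refl : prefix_le G x x
| pre_step y a i : prefix_le G x y -> G a -> 1 <= i <= arity y ->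
    prefix_le G x (ocomp i y a).

Definition is_prefix (x y : O) : Prop :=
  exists zs : seq O, size zs = arity x /\ y = full_comp x zs.

Definition covers (le : O -> O -> Prop) (x y : O) : Prop :=
  le x y /\ x <> y /\ forall z, le x z -> le z y -> z = x \/ z = y.

End Defs.

From mathcomp Require Import all_boot zify.

(* Every element is a composition of generators, so grafting the generators
   of z_1, ..., z_n one at a time climbs from x to x o [z_1, ..., z_n] in the
   prefix order.  Conversely, grafting a generator onto x o [z_1, ..., z_n]
   lands inside one of the blocks z_k (by associativity, after moving past
   the blocks to its left by commutativity), so the result is again a full
   composition of x.  Homogeneity makes the number of generators of an
   element well defined; it grows by exactly one along each generating step,
   hence nothing lies strictly between x and x o_i a. *)

Set Implicit Arguments.
Unset Strict Implicit.
Unset Printing Implicit Defensive.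

Lemma map_set_nth (T1 T2 : Type) (f : T1 -> T2) x0 s k y :
  map f (set_nth x0 s k y) = set_nth (f x0) (map f s) k (f y).
Proof. by elim: s k => [|a s IH] [|k] //=; [elim: k => //= k -> | rewrite IH]. Qed.

Lemma leq_nth_sumn s k : nth 0 s k <= sumn s.
Proof.
elim: s k => [|m s IH] [|k] //=; first exact: leq_addr.
exact: leq_trans (IH k) (leq_addl m _).
Qed.

Section Operad.
Variable O : operad.
Hypothesis arity_gt0 : forall x : O, 0 < arity x.

Lemma arity_fcomp_from_ge zs p (x : O) : 0 < p -> p + size zs <= arity x + 1 ->
  arity x <= arity (fcomp_from p x zs).
Proof.
elim: zs p => [|z zs IH] p p_gt0 //= szs.
have le_x : arity x <= arity (fcomp_from p.+1 x zs) by apply: IH; lia.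
have := arity_gt0 z.
by rewrite arity_comp; lia.
Qed.

Lemma fcomp_from_nseq_unit n p (x : O) : 0 < p -> p + n <= arity x + 1 ->
  fcomp_from p x (nseq n (ounit O)) = x.
Proof.
elim: n p => [|n IH] p p_gt0 le_n //=.
by rewrite IH ?comp_unit_r //; lia.
Qed.

Lemma full_comp_nseq_unit (x : O) : full_comp x (nseq (arity x) (ounit O)) = x.
Proof. by apply: fcomp_from_nseq_unit; lia. Qed.

Lemma ocomp_fcomp_from zs p (x y : O) i :
  0 < p -> p + size zs = arity x + 1 -> p <= i <= arity (fcomp_from p x zs) ->
  exists k j, [/\ k < size zs, 1 <= j <= arity (nth (ounit O) zs k) &
    ocomp i (fcomp_from p x zs) y =
    fcomp_from p x (set_nth (ounit O) zs k (ocomp j (nth (ounit O) zs k) y))].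
Proof.
elim: zs p i => [|z zs IH] p i p_gt0 /= szs i_range; first lia.
set w := fcomp_from p.+1 x zs in i_range *.
have le_xw : arity x <= arity w by apply: arity_fcomp_from_ge; lia.
have p_range : 1 <= p <= arity w by lia.
have z_gt0 := arity_gt0 z.
rewrite arity_comp // in i_range.
case: (ltnP i (p + arity z)) => [i_in_z | i_past_z].
  exists 0, (i - p + 1); split => //=; first lia.
  rewrite -comp_assoc //; last lia.
  by have -> : p + (i - p + 1) - 1 = i by lia.
have szs' : p.+1 + size zs = arity x + 1 by lia.
have i'_range : p.+1 <= i - arity z + 1 <= arity w by lia.
have [k [j [lt_k j_range eq_w]]] := IH p.+1 _ isT szs' i'_range.
exists k.+1, j; split => //=.
have -> : i = (i - arity z + 1) + arity z - 1 by lia.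
by rewrite comp_comm -?eq_w //; lia.
Qed.

Lemma ocomp_full_comp zs (x y : O) i :
  size zs = arity x -> 1 <= i <= arity (full_comp x zs) ->
  exists k j, [/\ k < size zs, 1 <= j <= arity (nth (ounit O) zs k) &
    ocomp i (full_comp x zs) y =
    full_comp x (set_nth (ounit O) zs k (ocomp j (nth (ounit O) zs k) y))].
Proof. by move=> szs; apply: ocomp_fcomp_from; lia. Qed.

Section Generators.
Variable G : O -> Prop.
Hypothesis G_generating : generating_set G.

Lemma prefix_le_ocomp (x a : O) i :
  G a -> 1 <= i <= arity x -> prefix_le G x (ocomp i x a).
Proof. exact: pre_step (pre_refl _ _). Qed.

Lemma prefix_le_trans (x y z : O) :
  prefix_le G x y -> prefix_le G y z -> prefix_le G x z.
Proof. by move=> le_xy; elim=> // w a i _ le_xw Ga i_range; apply: pre_step. Qed.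

Lemma prefix_le_ocomp2l (u w v : O) p :
  1 <= p <= arity u -> prefix_le G w v -> prefix_le G (ocomp p u w) (ocomp p u v).
Proof.
move=> p_range; elim=> [|v' a i _ IH Ga i_range]; first exact: pre_refl.
rewrite -comp_assoc //; apply: pre_step => //.
by rewrite arity_comp //; lia.
Qed.

Lemma unit_prefix_le (z : O) : generated G z -> prefix_le G (ounit O) z.
Proof.
elim=> [|a Ga|i x y _ le_1x _ le_1y i_range].
- exact: pre_refl.
- by rewrite -(comp_unit_l a); apply: prefix_le_ocomp; rewrite ?arity_unit.
- apply: prefix_le_trans le_1x _.
  by rewrite -{1}(comp_unit_r i_range); apply: prefix_le_ocomp2l i_range le_1y.
Qed.

Lemma prefix_le_fcomp_from zs p (x : O) : 0 < p -> p + size zs <= arity x + 1 ->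
  prefix_le G x (fcomp_from p x zs).
Proof.
elim: zs p => [|z zs IH] p p_gt0 /= szs; first exact: pre_refl.
set w := fcomp_from p.+1 x zs.
have le_xw : arity x <= arity w by apply: arity_fcomp_from_ge; lia.
have p_range : 1 <= p <= arity w by lia.
apply: prefix_le_trans (IH p.+1 isT _) _; first lia.
rewrite -/w -{1}(comp_unit_r p_range).
exact: prefix_le_ocomp2l p_range (unit_prefix_le (G_generating z)).
Qed.

Lemma prefix_le_eq_or_step (x y : O) : prefix_le G x y ->
  x = y \/ exists a i, [/\ G a, 1 <= i <= arity x & prefix_le G (ocomp i x a) y].
Proof.
elim=> [|y' a i _ [<-|[b [j [Gb j_range le_y']]]] Ga i_range]; first by left.
  by right; exists a, i; split => //; apply: pre_refl.
by right; exists b, j; split => //; apply: pre_step.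
Qed.

Lemma prefix_le_is_prefix (x y : O) : prefix_le G x y -> is_prefix x y.
Proof.
elim=> [|y' a i _ [zs [szs ->]] Ga i_range].
  by exists (nseq (arity x) (ounit O)); rewrite size_nseq full_comp_nseq_unit.
have [k [j [lt_k _ ->]]] := ocomp_full_comp a szs i_range.
exists (set_nth (ounit O) zs k (ocomp j (nth (ounit O) zs k) a)).
by rewrite size_set_nth; split => //; lia.
Qed.

Lemma is_prefix_prefix_le (x y : O) : is_prefix x y -> prefix_le G x y.
Proof. by move=> [zs [szs ->]]; apply: prefix_le_fcomp_from; lia. Qed.

Lemma prefix_leP (x y : O) : prefix_le G x y <-> is_prefix x y.
Proof. by split; [apply: prefix_le_is_prefix | apply: is_prefix_prefix_le]. Qed.

(* The anonymous list recursion inside [wf_tree], named so that it can be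
   reasoned about by induction. *)
Fixpoint wf_forest (ts : seq (tree O)) : Prop :=
  match ts with [::] => True | t :: ts' => wf_tree G t /\ wf_forest ts' end.

Lemma wf_forestP ts :
  wf_forest ts <-> forall k, k < size ts -> wf_tree G (nth (Leaf O) ts k).
Proof.
elim: ts => [|t ts IH] //=; split.
  by move=> [wf_t /IH wf_ts] [|k] //= /wf_ts.
by move=> wf_nth; split; [exact: (wf_nth 0) | apply/IH => k; exact: (wf_nth k.+1)].
Qed.

Lemma wf_tree_Node a ts : wf_tree G (Node a ts) <->
  [/\ G a, size ts = arity a & forall k, k < size ts -> wf_tree G (nth (Leaf O) ts k)].
Proof.
split; first by move=> [Ga [szs /wf_forestP wf_ts]].
by move=> [Ga szs /wf_forestP wf_ts].
Qed.

Lemma graft_tree t s i : wf_tree G t -> wf_tree G s -> 1 <= i <= arity (eval_tree t) ->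
  exists u, [/\ wf_tree G u, eval_tree u = ocomp i (eval_tree t) (eval_tree s)
    & nodes u = nodes t + nodes s].
Proof.
move: (ltnSn (nodes t)); move: {2}(nodes t).+1 => n.
elim: n t i => // n IH [|a ts] i /= lt_tn wf_t wf_s i_range.
  rewrite arity_unit in i_range.
  by exists s; split => //; rewrite (_ : i = 1) ?comp_unit_l //; lia.
move: wf_t => /wf_tree_Node[Ga szs wf_ts].
have [k [j [lt_k j_range eq_comp]]] :=
  ocomp_full_comp (eval_tree s) (etrans (size_map _ _) szs) i_range.
rewrite size_map in lt_k; rewrite (nth_map (Leaf O)) // in j_range eq_comp.
have lt_kn : nodes (nth (Leaf O) ts k) < n.
  by have := leq_nth_sumn (map (@nodes O) ts) k; rewrite (nth_map (Leaf O)) //; lia.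
have [u [wf_u eval_u nodes_u]] := IH _ _ lt_kn (wf_ts k lt_k) wf_s j_range.
exists (Node a (set_nth (Leaf O) ts k u)); split.
- apply/wf_tree_Node; split => //; first by rewrite size_set_nth; lia.
  move=> k'; rewrite size_set_nth nth_set_nth /=.
  by case: eqP => // _ lt_k'; apply: wf_ts; lia.
- by rewrite /= map_set_nth eval_u eq_comp.
- have := leq_nth_sumn (map (@nodes O) ts) k.
  by rewrite /= map_set_nth sumn_set_nth0 (nth_map (Leaf O)) //; lia.
Qed.

Definition gen_tree (a : O) : tree O := Node a (nseq (arity a) (Leaf O)).

Lemma wf_gen_tree a : G a -> wf_tree G (gen_tree a).
Proof.
by move=> Ga; apply/wf_tree_Node; rewrite size_nseq; split=> // k _; rewrite nth_nseq if_same.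
Qed.

Lemma eval_gen_tree a : eval_tree (gen_tree a) = a.
Proof. by rewrite /= map_nseq full_comp_nseq_unit. Qed.

Lemma nodes_gen_tree a : nodes (gen_tree a) = 1.
Proof. by rewrite /= map_nseq sumn_nseq. Qed.

Lemma generated_tree x : generated G x -> exists2 t, wf_tree G t & eval_tree t = x.
Proof.
elim=> [|a Ga|i y z _ [ty wf_ty <-] _ [tz wf_tz <-] i_range].
- by exists (Leaf O).
- by exists (gen_tree a); [apply: wf_gen_tree | apply: eval_gen_tree].
- by have [u [wf_u eval_u _]] := graft_tree wf_ty wf_tz i_range; exists u.
Qed.

Definition has_degree (x : O) n :=
  exists t, [/\ wf_tree G t, eval_tree t = x & nodes t = n].

Lemma has_degree_exists x : exists n, has_degree x n.
Proof.
have [t wf_t eval_t] := generated_tree (G_generating x).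
by exists (nodes t), t.
Qed.

Lemma has_degree_ocomp x n a i :
  has_degree x n -> G a -> 1 <= i <= arity x -> has_degree (ocomp i x a) n.+1.
Proof.
move=> [t [wf_t <- <-]] Ga i_range.
have [u [wf_u eval_u nodes_u]] := graft_tree wf_t (wf_gen_tree Ga) i_range.
by exists u; rewrite eval_u eval_gen_tree nodes_u nodes_gen_tree addn1.
Qed.

Section Homogeneous.
Hypothesis homogeneous_G : forall t1 t2, wf_tree G t1 -> wf_tree G t2 ->
  eval_tree t1 = eval_tree t2 -> nodes t1 = nodes t2.

Lemma has_degree_unique x n m : has_degree x n -> has_degree x m -> n = m.
Proof.
move=> [t1 [wf_t1 eval_t1 <-]] [t2 [wf_t2 eval_t2 <-]].
by apply: homogeneous_G; rewrite ?eval_t1 ?eval_t2.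
Qed.

Lemma ocomp_gen_neq x a i : G a -> 1 <= i <= arity x -> ocomp i x a <> x.
Proof.
move=> Ga i_range eq_x; have [n deg_x] := has_degree_exists x.
have := has_degree_ocomp deg_x Ga i_range; rewrite eq_x => /(has_degree_unique deg_x).
exact: n_Sn.
Qed.

Lemma prefix_le_degree x y n m : prefix_le G x y ->
  has_degree x n -> has_degree y m -> x = y \/ n < m.
Proof.
move=> le_xy deg_x; elim: le_xy m => [|y' a i _ IH Ga i_range] m deg_y; first by left.
have [m' deg_y'] := has_degree_exists y'.
have -> := has_degree_unique deg_y (has_degree_ocomp deg_y' Ga i_range).
right; case: (IH _ deg_y') => [eq_xy'|lt_nm']; last exact: ltnW.
by rewrite eq_xy' in deg_x; rewrite (has_degree_unique deg_x deg_y').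
Qed.

Lemma covers_prefix_le x y : covers (prefix_le G) x y <->
  exists a i, G a /\ 1 <= i <= arity x /\ y = ocomp i x a.
Proof.
split.
- move=> [le_xy [neq_xy cover]].
  case: (prefix_le_eq_or_step le_xy) => [//|[a [i [Ga i_range le_y]]]].
  exists a, i; split => //; split => //.
  by case: (cover _ (prefix_le_ocomp Ga i_range) le_y) => [/(ocomp_gen_neq Ga i_range)|].
- move=> [a [i [Ga [i_range ->]]]].
  split; first exact: prefix_le_ocomp.
  split; first by move=> /esym /(ocomp_gen_neq Ga i_range).
  move=> z le_xz le_zy.
  have [n deg_x] := has_degree_exists x.
  have deg_y := has_degree_ocomp deg_x Ga i_range.
  have [k deg_z] := has_degree_exists z.
  case: (prefix_le_degree le_xz deg_x deg_z) => [<-|lt_nk]; first by left.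
  case: (prefix_le_degree le_zy deg_z deg_y) => [->|lt_kn]; first by right.
  lia.
Qed.

End Homogeneous.

End Generators.
End Operad.

Theorem proposition4p5 (O : operad) (G : O -> Prop) :
  min_generating_set G -> finite_set G -> homogeneous G ->
  (forall x y : O, prefix_le G x y <-> is_prefix x y) /\
  (forall x y : O, covers (prefix_le G) x y <->
     exists a i, G a /\ 1 <= i <= arity x /\ y = ocomp i x a).
Proof.
move=> [G_generating _] _ [arity_neq0 [_ homogeneous_G]].
have arity_gt0 (x : O) : 0 < arity x by rewrite lt0n; apply/eqP.
by split=> x y; [apply: prefix_leP | apply: covers_prefix_le].
Qed.
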